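(* Let $\mathrm{V}=\{1,\dots,n\}$ with $n=r_1r_2$ for integers $r_1,r_2\ge2$. Then there exist a graph $\mathrm{G}$ with node set $\mathrm{V}$, a clique coverage $\mathsf{H}^\ast$ of $\mathrm{G}$ consisting only of cliques of size $r_1$ or $r_2$, and a sequence $\mathrm{Q}_0,\dots,\mathrm{Q}_{r_1+r_2-1}$ of cliques from $\mathsf{H}^\ast$, such that the clique-gossip averaging algorithm along this sequence satisfies $\mathbf{x}(r_1+r_2)=\big(\frac1n\sum_{j=1}^n\mathbf{x}_j(0)\big)\mathbf{1}$ for every initial value $\mathbf{x}(0)\in\mathbb{R}^n$; in particular it converges globally in finite time, in $r_1+r_2$ steps.
   Context: A clique of a simple undirected graph $\mathrm{G}$ on $\mathrm{V}$ is a vertex subset inducing a complete subgraph; a clique coverage is a finite set of cliques whose union is $\mathrm{V}$ and whose union of induced subgraphs is connected. The clique-gossip averaging algorithm along a sequence of cliques $\mathrm{Q}_0,\mathrm{Q}_1,\dots$ acts on $\mathbf{x}(t)\in\mathbb{R}^n$ by $\mathbf{x}_i(t+1)=\frac{1}{|\mathrm{Q}_t|}\sum_{j\in\mathrm{Q}_t}\mathbf{x}_j(t)$ if $i\in\mathrm{Q}_t$ and $\mathbf{x}_i(t+1)=\mathbf{x}_i(t)$ otherwise. $\mathbf{1}$ denotes the all-ones vector. It converges globally in finite time if for every initial value $\mathbf{x}(0)$ there is $T\ge0$ with $\mathbf{x}(T)\in\mathrm{span}\{\mathbf{1}\}$. *)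

From HB Require Import structures.
From mathcomp Require Import all_boot all_order all_algebra.
Set Implicit Arguments. Unset Strict Implicit. Unset Printing Implicit Defensive.
Import Order.TTheory GRing.Theory Num.Theory.

Definition simple_graph (n : nat) (e : rel 'I_n) : Prop :=
  symmetric e /\ irreflexive e.

Definition is_clique (n : nat) (e : rel 'I_n) (Q : {set 'I_n}) : Prop :=
  forall i j, i \in Q -> j \in Q -> i != j -> e i j.

Definition cover_rel (n : nat) (H : {set {set 'I_n}}) : rel 'I_n :=
  fun i j => [exists Q in H, [&& i \in Q, j \in Q & i != j]].

Definition clique_coverage (n : nat) (e : rel 'I_n) (H : {set {set 'I_n}}) : Prop :=
  [/\ forall Q, Q \in H -> is_clique e Q,
      \bigcup_(Q in H) Q = [set: 'I_n]
    & forall i j : 'I_n, connect (cover_rel H) i j].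

Local Open Scope ring_scope.

Definition gossip_step (R : realFieldType) (n : nat) (Q : {set 'I_n})
    (x : 'I_n -> R) : 'I_n -> R :=
  fun i => if i \in Q then (\sum_(j in Q) x j) / (#|Q|%:R) else x i.

Fixpoint gossip_traj (R : realFieldType) (n : nat) (Qs : nat -> {set 'I_n})
    (x0 : 'I_n -> R) (t : nat) : 'I_n -> R :=
  match t with
  | O => x0
  | S t' => gossip_step (Qs t') (gossip_traj Qs x0 t')
  end.

From HB Require Import structures.
From mathcomp Require Import all_boot all_order all_algebra zify.
Import Order.TTheory GRing.Theory Num.Theory.
Set Implicit Arguments. Unset Strict Implicit.
Local Open Scope ring_scope.

(* Arrange the n = r1 r2 nodes in an r1 x r2 grid (node k sits in row k / r2
   and column k mod r2) and take the rows (size r2) and columns (size r1) as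
   cliques.  Averaging over the r1 rows makes every node carry its row
   average; every column then contains exactly one node of each row, so
   averaging over the r2 columns gives every node the mean of the row
   averages, which is the global mean. *)

Section Grid.
Variables r1 r2 : nat.
Local Notation V := 'I_(r1 * r2).

Lemma grid_idx_subproof (a : 'I_r1) (b : 'I_r2) : (a * r2 + b < r1 * r2)%N.
Proof. have := ltn_ord a; have := ltn_ord b; nia. Qed.

Definition grid_idx (a : 'I_r1) (b : 'I_r2) : V := Ordinal (grid_idx_subproof a b).

Lemma grid_row_lt (k : V) : (k %/ r2 < r1)%N.
Proof.
case: r2 k => [|r] k; first by case: k => m; rewrite muln0.
by rewrite ltn_divLR.
Qed.

Lemma grid_col_lt (k : V) : (k %% r2 < r2)%N.
Proof.
case: r2 k => [|r] k; first by case: k => m; rewrite muln0.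
by rewrite ltn_pmod.
Qed.

Lemma grid_idx_div (a : 'I_r1) (b : 'I_r2) : (grid_idx a b %/ r2)%N = a.
Proof.
rewrite /= divnMDl; last by case: r2 b => [[]|].
by rewrite divn_small ?addn0.
Qed.

Lemma grid_idx_mod (a : 'I_r1) (b : 'I_r2) : (grid_idx a b %% r2)%N = b.
Proof. by rewrite /= modnMDl modn_small. Qed.

Lemma big_grid (T : Type) (z : T) (op : Monoid.com_law z) (F : V -> T) :
  \big[op/z]_(k : V) F k = \big[op/z]_(a < r1) \big[op/z]_(b < r2) F (grid_idx a b).
Proof.
rewrite pair_big (reindex (fun p : 'I_r1 * 'I_r2 => grid_idx p.1 p.2)) //.
exists (fun k => (Ordinal (grid_row_lt k), Ordinal (grid_col_lt k))).
  by move=> [a b] _; congr pair; apply: val_inj; rewrite /= ?grid_idx_div ?grid_idx_mod.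
by move=> k _; apply: val_inj; rewrite /= -divn_eq.
Qed.

Definition row_set (a : nat) : {set V} := [set k : V | (k %/ r2 == a)%N].
Definition col_set (b : nat) : {set V} := [set k : V | (k %% r2 == b)%N].

Lemma big_row_set (T : Type) (z : T) (op : Monoid.com_law z) (a : 'I_r1)
    (F : V -> T) :
  \big[op/z]_(k in row_set a) F k = \big[op/z]_(b < r2) F (grid_idx a b).
Proof.
rewrite big_mkcond big_grid (bigD1 a) //= [X in op _ X]big1 ?Monoid.mulm1.
  by apply: eq_bigr => b _; rewrite inE grid_idx_div eqxx.
move=> a' /negPf na'; apply: big1 => b _.
by rewrite inE grid_idx_div (inj_eq val_inj) na'.
Qed.

Lemma big_col_set (T : Type) (z : T) (op : Monoid.com_law z) (b : 'I_r2)
    (F : V -> T) :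
  \big[op/z]_(k in col_set b) F k = \big[op/z]_(a < r1) F (grid_idx a b).
Proof.
rewrite big_mkcond big_grid; apply: eq_bigr => a _.
rewrite (bigD1 b) //= inE grid_idx_mod eqxx [X in op _ X]big1 ?Monoid.mulm1 //.
by move=> b' /negPf nb'; rewrite inE grid_idx_mod (inj_eq val_inj) nb'.
Qed.

Lemma card_row_set (a : nat) : (a < r1)%N -> #|row_set a| = r2.
Proof.
move=> lt_a_r1; rewrite -sum1_card.
by rewrite (@big_row_set _ _ addn (Ordinal lt_a_r1)) sum1_card card_ord.
Qed.

Lemma card_col_set (b : nat) : (b < r2)%N -> #|col_set b| = r1.
Proof.
move=> lt_b_r2; rewrite -sum1_card.
by rewrite (@big_col_set _ _ addn (Ordinal lt_b_r2)) sum1_card card_ord.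
Qed.

Definition grid_rel : rel V :=
  fun i j => (i != j) && ((i %/ r2 == j %/ r2)%N || (i %% r2 == j %% r2)%N).

Lemma grid_rel_simple : simple_graph grid_rel.
Proof.
split; last by move=> i; rewrite /grid_rel eqxx.
by move=> i j; rewrite /grid_rel eq_sym (eq_sym (i %/ r2)%N) (eq_sym (i %% r2)%N).
Qed.

Lemma row_set_clique (a : nat) : is_clique grid_rel (row_set a).
Proof. by move=> i j; rewrite /grid_rel !inE => /eqP-> /eqP-> ->; rewrite eqxx. Qed.

Lemma col_set_clique (b : nat) : is_clique grid_rel (col_set b).
Proof. by move=> i j; rewrite /grid_rel !inE => /eqP-> /eqP-> ->; rewrite eqxx orbT. Qed.

Definition grid_schedule (t : nat) : {set V} :=
  if (t < r1)%N then row_set t else col_set (t - r1).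

Lemma grid_schedule_row (t : nat) : (t < r1)%N -> grid_schedule t = row_set t.
Proof. by rewrite /grid_schedule => ->. Qed.

Lemma grid_schedule_col (s : nat) : grid_schedule (r1 + s) = col_set s.
Proof. by rewrite /grid_schedule ltnNge leq_addr addKn. Qed.

Definition grid_cliques : {set {set V}} :=
  [set grid_schedule t | t : 'I_(r1 + r2)].

Lemma grid_schedule_in (t : nat) : (t < r1 + r2)%N -> grid_schedule t \in grid_cliques.
Proof. by move=> lt_t; apply/imsetP; exists (Ordinal lt_t). Qed.

Lemma row_set_in (k : V) : row_set (k %/ r2) \in grid_cliques.
Proof.
rewrite -grid_schedule_row ?grid_row_lt // grid_schedule_in //.
by have := grid_row_lt k; lia.
Qed.

Lemma col_set_in (k : V) : col_set (k %% r2) \in grid_cliques.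
Proof.
by rewrite -grid_schedule_col grid_schedule_in // ltn_add2l grid_col_lt.
Qed.

Lemma grid_cliques_card (Q : {set V}) : Q \in grid_cliques -> #|Q| = r1 \/ #|Q| = r2.
Proof.
case/imsetP=> [[t lt_t] _ ->]; rewrite /grid_schedule /=.
case: ifP => [lt_t_r1 | /negbT ge_t_r1]; first by right; apply: card_row_set.
by left; apply: card_col_set; lia.
Qed.

Lemma grid_cliques_cover : \bigcup_(Q in grid_cliques) Q = [set: V].
Proof.
apply/setP => k; rewrite inE; apply/bigcupP.
by exists (row_set (k %/ r2)); rewrite ?row_set_in ?inE.
Qed.

Lemma grid_cliques_connected (i j : V) : connect (cover_rel grid_cliques) i j.
Proof.
pose m := grid_idx (Ordinal (grid_row_lt i)) (Ordinal (grid_col_lt j)).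
apply: (connect_trans (x := i) (y := m)).
  case: (eqVneq i m) => [<- // | ne_im]; apply: connect1; apply/existsP.
  by exists (row_set (i %/ r2)); rewrite row_set_in !inE grid_idx_div eqxx ne_im.
case: (eqVneq m j) => [-> // | ne_mj]; apply: connect1; apply/existsP.
by exists (col_set (j %% r2)); rewrite col_set_in !inE grid_idx_mod eqxx ne_mj.
Qed.

Lemma grid_clique_coverage : clique_coverage grid_rel grid_cliques.
Proof.
split; [|exact: grid_cliques_cover|exact: grid_cliques_connected].
by move=> Q /imsetP [t _ ->]; rewrite /grid_schedule; case: ifP => _;
  [apply: row_set_clique | apply: col_set_clique].
Qed.

Variable R : realFieldType.
Variable x : V -> R.

Definition row_avg (a : nat) : R := (\sum_(k in row_set a) x k) / r2%:R.

Lemma sum_row_avg : \sum_(a < r1) row_avg a = (\sum_(k : V) x k) / r2%:R.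
Proof. by rewrite -mulr_suml big_grid; under eq_bigr do rewrite big_row_set. Qed.

Lemma gossip_traj_rows (t : nat) : (t <= r1)%N -> forall k : V,
  gossip_traj grid_schedule x t k
  = if (k %/ r2 < t)%N then row_avg (k %/ r2) else x k.
Proof.
elim: t => [|t IHt] lt_t k //=.
rewrite /gossip_step grid_schedule_row // card_row_set // inE ltnS leq_eqVlt.
case: eqP => [-> | _]; last exact: IHt (ltnW lt_t) k.
congr (_ / _); apply: eq_bigr => j; rewrite inE => /eqP eq_jt.
by rewrite IHt ?eq_jt ?ltnn // ltnW.
Qed.

Lemma gossip_traj_cols (s : nat) : (0 < r2)%N -> (s <= r2)%N -> forall k : V,
  gossip_traj grid_schedule x (r1 + s) k
  = if (k %% r2 < s)%N then (\sum_(j : V) x j) / (r1 * r2)%:R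
    else row_avg (k %/ r2).
Proof.
move=> r2_gt0; elim: s => [|s IHs] lt_s k.
  by rewrite addn0 gossip_traj_rows // grid_row_lt ltn0.
rewrite addnS /= /gossip_step grid_schedule_col card_col_set // inE ltnS leq_eqVlt.
case: eqP => [eq_ks | _]; last exact: IHs (ltnW lt_s) k.
have -> : \sum_(j in col_set s) gossip_traj grid_schedule x (r1 + s) j
          = \sum_(j in col_set s) row_avg (j %/ r2).
  by apply: eq_bigr => j; rewrite inE => /eqP ej; rewrite IHs ?ej ?ltnn 1?ltnW.
rewrite (@big_col_set _ _ +%R (Ordinal lt_s)).
rewrite (eq_bigr (fun a : 'I_r1 => row_avg a)); last by move=> a _; rewrite grid_idx_div.
by rewrite sum_row_avg natrM invfM mulrAC mulrA.
Qed.

End Grid.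

Theorem theorem2 (r1 r2 : nat) (hr1 : (2 <= r1)%N) (hr2 : (2 <= r2)%N) :
  exists (e : rel 'I_(r1 * r2)) (H : {set {set 'I_(r1 * r2)}})
         (Qs : nat -> {set 'I_(r1 * r2)}),
    [/\ simple_graph e,
        clique_coverage e H,
        (forall Q, Q \in H -> #|Q| = r1 \/ #|Q| = r2),
        (forall t, (t < r1 + r2)%N -> Qs t \in H)
      & forall (R : realFieldType) (x0 : 'I_(r1 * r2) -> R) (i : 'I_(r1 * r2)),
          gossip_traj Qs x0 (r1 + r2) i
          = (\sum_(j < r1 * r2) x0 j) / ((r1 * r2)%:R)].
Proof.
exists (@grid_rel r1 r2), (@grid_cliques r1 r2), (@grid_schedule r1 r2).
split.
- exact: grid_rel_simple.
- exact: grid_clique_coverage.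
- exact: grid_cliques_card.
- exact: grid_schedule_in.
- move=> R x0 i.
  by rewrite gossip_traj_cols ?grid_col_lt //; apply: ltn_trans hr2.
Qed.
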